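(* Let $H$ be a $3$-graph with $s$ vertices, let $t\geq 1$, and let $G$ be a $3$-graph that is $H\sqcup S_{2,t}$-free. Let $v\in V(G)$. If $G-\{v\}$ contains a copy of $H$, then $\omega(G_v)\leq s+t$.
   Context: A $3$-graph $G$ is $F$-free if it contains no subgraph isomorphic to $F$. $S_{2,t}$ is the $3$-graph with vertex set $\{w_1,w_2,u_1,\dots,u_t\}$ and edge set $\{w_1w_2u_1,\dots,w_1w_2u_t\}$. $\sqcup$ denotes vertex-disjoint union. For $S\subseteq V(G)$, $G-S$ is the subgraph of $G$ induced by $V(G)\setminus S$. The link graph of $v$ is the $2$-graph $G_v=\{ab: vab\in E(G)\}$, and $\omega(\cdot)$ denotes the order of a maximum clique of a $2$-graph. *)

From mathcomp Require Import all_boot.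
Set Implicit Arguments. Unset Strict Implicit. Unset Printing Implicit Defensive.

Definition is3graph (T : finType) (E : {set {set T}}) : Prop :=
  forall e, e \in E -> #|e| = 3.

Definition embeds (U T : finType) (EF : {set {set U}}) (EG : {set {set T}})
  (f : U -> T) : Prop :=
  injective f /\ forall e, e \in EF -> f @: e \in EG.

Definition contains (U T : finType) (EG : {set {set T}}) (EF : {set {set U}}) : Prop :=
  exists f : U -> T, embeds EF EG f.

Definition Ffree (U T : finType) (EG : {set {set T}}) (EF : {set {set U}}) : Prop :=
  ~ contains EG EF.

(* S_{2,t} on 'I_(t+2): w1 = 0, w2 = 1, u_i = i+1 (i = 1..t); edges w1 w2 u_i. *)
Definition S2t (t : nat) : {set {set 'I_t.+2}} :=
  [set [set ord0; inord 1; j] | j in [set j : 'I_t.+2 | 1 < j]].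

Definition disj_union (U V : finType) (EH : {set {set U}}) (EF : {set {set V}})
  : {set {set (U + V)%type}} :=
  [set (@inl U V) @: e | e : {set U} in EH] :|: [set (@inr U V) @: e | e : {set V} in EF].

Definition deleteV (T : finType) (EG : {set {set T}}) (S : {set T})
  : {set {set {x : T | x \notin S}}} :=
  [set e : {set {x : T | x \notin S}} | (val @: e) \in EG].

Definition link (T : finType) (EG : {set {set T}}) (v : T) : rel T :=
  fun a b => [set v; a; b] \in EG.

Definition is_clique (T : finType) (r : rel T) (K : {set T}) : bool :=
  [forall a in K, forall b in K, (a != b) ==> r a b].

Definition omega (T : finType) (r : rel T) : nat :=
  \max_(K : {set T} | is_clique r K) #|K|.

(* Let K be a clique of the link of v with more than s + t vertices, and let S be the
   vertex set of a copy of H avoiding v.  Since G is a 3-graph, v is not in K, and at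
   least t + 1 vertices of K lie outside S.  Together with v they span a copy of
   S_{2,t} (v and one of them as the centre pair, the other t as leaves) which is
   disjoint from the copy of H, so G would contain H ⊔ S_{2,t}. *)
From mathcomp Require Import all_boot zify.

Set Implicit Arguments. Unset Strict Implicit. Unset Printing Implicit Defensive.

Lemma is_cliqueP (T : finType) (r : rel T) (K : {set T}) :
  reflect {in K &, forall a b, a != b -> r a b} (is_clique r K).
Proof.
apply: (iffP forall_inP) => [cl a b aK bK ab | cl a aK].
  by move/forall_inP/(_ b bK)/implyP: (cl a aK); apply.
by apply/forall_inP => b bK; apply/implyP; apply: cl.
Qed.

Lemma is_cliqueS (T : finType) (r : rel T) (K L : {set T}) :
  L \subset K -> is_clique r K -> is_clique r L.
Proof.
move=> LK /is_cliqueP cl; apply/is_cliqueP => a b aL bL.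
by apply: cl; apply: (subsetP LK).
Qed.

Lemma link_loopF (T : finType) (EG : {set {set T}}) (v b : T) :
  is3graph EG -> link EG v v b = false.
Proof.
move=> G3; apply/negP => /G3; rewrite /link setUid cards2.
by case: (v != b).
Qed.

Lemma link_clique_notin (T : finType) (EG : {set {set T}}) (v : T) (K : {set T}) :
  is3graph EG -> is_clique (link EG v) K -> 1 < #|K| -> v \notin K.
Proof.
move=> G3 /is_cliqueP cl K2; apply/negP => vK.
move: K2; rewrite (cardsD1 v K) vK ltnS => /card_gt0P [b].
rewrite !inE => /andP [bv bK].
by move: (cl v b vK bK); rewrite eq_sym bv link_loopF // => /(_ isT).
Qed.

Lemma contains_deleteV (U T : finType) (EF : {set {set U}}) (EG : {set {set T}})
    (S : {set T}) :
  contains (deleteV EG S) EF ->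
  exists2 f : U -> T, embeds EF EG f & forall x, f x \notin S.
Proof.
move=> [f [finj fE]]; exists (val \o f) => [|x]; last exact: (valP (f x)).
split=> [x y /val_inj /finj // | e eF].
by move: (fE e eF); rewrite inE -imset_comp.
Qed.

Lemma contains_disj_union (U V T : finType) (EH : {set {set U}})
    (EF : {set {set V}}) (EG : {set {set T}}) (f : U -> T) (g : V -> T) :
  embeds EH EG f -> embeds EF EG g -> (forall x y, f x != g y) ->
  contains EG (disj_union EH EF).
Proof.
move=> [finj fE] [ginj gE] fg.
pose h z := match z with inl x => f x | inr y => g y end.
exists h; split.
  case=> [x1|y1] [x2|y2] //= E.
  - by rewrite (finj _ _ E).
  - by case/eqP: (fg x1 y2).
  - by case/eqP: (fg x2 y1).
  - by rewrite (ginj _ _ E).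
move=> e; rewrite inE => /orP [] /imsetP [e' e'E ->]; rewrite -imset_comp.
  by rewrite (@eq_imset _ _ (h \o inl) f) //; apply: fE.
by rewrite (@eq_imset _ _ (h \o inr) g) //; apply: gE.
Qed.

Lemma embeds_S2t (T : finType) (EG : {set {set T}}) (t : nat) (g : 'I_t.+2 -> T) :
  injective g -> (forall j : 'I_t.+2, 1 < j -> [set g ord0; g (inord 1); g j] \in EG) ->
  embeds (S2t t) EG g.
Proof.
move=> ginj gE; split=> // e /imsetP [j]; rewrite inE => j1 ->.
by rewrite !imsetU !imset_set1; apply: gE.
Qed.

Lemma link_clique_S2t (T : finType) (EG : {set {set T}}) (v : T) (K : {set T})
    (t : nat) :
  v \notin K -> is_clique (link EG v) K -> t < #|K| ->
  exists2 g : 'I_t.+2 -> T, embeds (S2t t) EG g & forall j, g j \in v |: K.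
Proof.
move=> vK /is_cliqueP cl Kbig.
pose b (i : 'I_t.+1) := enum_val (widen_ord Kbig i).
have binj : injective b.
  by move=> i1 i2 /enum_val_inj /(congr1 val) E; apply: val_inj.
have bK i : b i \in K by apply: enum_valP.
pose g (j : 'I_t.+2) := oapp b v (unlift ord0 j).
have gK j : g j \in v |: K.
  by rewrite /g; case: unliftP => [i _|_]; rewrite /= !inE ?bK ?orbT ?eqxx.
exists g => //; apply: embeds_S2t.
  move=> j1 j2; rewrite /g; case: unliftP => [i1 ->|->]; case: unliftP => [i2 ->|->] //=.
  - by move/binj ->.
  - by move=> biv; move: (bK i1); rewrite biv (negbTE vK).
  - by move=> vib; move: (bK i2); rewrite -vib (negbTE vK).
move=> j j1; have -> : inord 1 = lift ord0 (ord0 : 'I_t.+1).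
  by apply: val_inj; rewrite /= inordK.
rewrite /g liftK unlift_none /=.
case: unliftP j1 => [i -> /= i0 | -> //]; apply: cl; rewrite ?bK //.
by apply/eqP => /binj i0E; rewrite -i0E in i0.
Qed.

Theorem claim3p5 (U T : finType) (EH : {set {set U}}) (s t : nat)
  (EG : {set {set T}}) (v : T) :
  is3graph EH -> #|U| = s -> 1 <= t ->
  is3graph EG ->
  Ffree EG (disj_union EH (S2t t)) ->
  contains (deleteV EG [set v]) EH ->
  omega (link EG v) <= s + t.
Proof.
move=> _ Us t1 G3 GF /contains_deleteV [f fH fv].
apply/bigmax_leqP => K Kcl; rewrite leqNgt; apply/negP => Kbig.
pose S := f @: U.
have vK : v \notin K by apply: link_clique_notin G3 Kcl _; lia.
have Sbig : t < #|K :\: S|.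
  have : #|K :&: S| <= s.
    by rewrite -Us; apply: leq_trans (leq_imset_card f U); apply/subset_leq_card/subsetIr.
  by rewrite cardsD; lia.
have vKS : v \notin K :\: S by rewrite inE (negbTE vK) andbF.
have [g gS gK] := link_clique_S2t vKS (is_cliqueS (subsetDl K S) Kcl) Sbig.
apply: GF; apply: (contains_disj_union fH gS) => x j.
have fxS : f x \in S by apply: imset_f.
apply/eqP => fg; move: (gK j) (fv x); rewrite -fg !inE fxS /= orbF.
by move=> ->.
Qed.
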